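(* Let $p,m,n\ge1$, let $a_1,\dots,a_n\in\mathbb{C}$ be distinct, let $m_1,\dots,m_n\ge1$ be integers, and let $C_0,\dots,C_{m-1}$, $B_k^{(j)}$ be complex $p\times p$ matrices. Let $$R(\lambda)=I\lambda^m-C_{m-1}\lambda^{m-1}-\cdots-C_1\lambda-C_0+\sum_{j=1}^{n}\sum_{k=1}^{m_j}\frac{B_k^{(j)}}{(\lambda-a_j)^k},$$ let $\|\cdot\|$ be any induced matrix norm, and define the real rational function $$q(x)=x^m-\|C_{m-1}\|x^{m-1}-\cdots-\|C_1\|x-\|C_0\|-\sum_{j=1}^n\sum_{k=1}^{m_j}\frac{\|B_k^{(j)}\|}{(x-|a_j|)^k}.$$ If $\lambda_0$ is an eigenvalue of $R(\lambda)$ and $R$ is a real zero of $q$ with $|a_j|<R$ for all $j=1,\dots,n$, then $|\lambda_0|\le R$.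
   Context: A scalar $\lambda_0\in\mathbb{C}\setminus\{a_1,\dots,a_n\}$ is an eigenvalue of $R(\lambda)$ if there is a nonzero $v\in\mathbb{C}^p$ with $R(\lambda_0)v=0$. *)

From HB Require Import structures.
From mathcomp Require Import all_boot all_order all_algebra.
From mathcomp Require Import complex.
From mathcomp Require Import boolp classical_sets reals.
Set Implicit Arguments. Unset Strict Implicit. Unset Printing Implicit Defensive.
Import Order.TTheory GRing.Theory Num.Theory.
Local Open Scope ring_scope.
Local Open Scope classical_set_scope.

Definition cmod (Rt : realType) (z : Rt[i]) : Rt := ComplexField.Normc.normc z.

Definition is_vnorm (Rt : realType) (p : nat) (nu : 'cV[Rt[i]]_p -> Rt) : Prop :=
  [/\ forall v, 0 <= nu v,
      forall v, nu v = 0 -> v = 0,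
      forall (c : Rt[i]) v, nu (c *: v) = cmod c * nu v
    & forall v w, nu (v + w) <= nu v + nu w].

Definition induced_norm (Rt : realType) (p : nat) (nu : 'cV[Rt[i]]_p -> Rt)
  (A : 'M[Rt[i]]_p) : Rt :=
  sup [set nu (A *m v) | v in [set v | nu v = 1]].

Definition Rmat (Rt : realType) (p m n : nat) (C : 'I_m -> 'M[Rt[i]]_p)
  (a : 'I_n -> Rt[i]) (mult : 'I_n -> nat) (B : 'I_n -> nat -> 'M[Rt[i]]_p)
  (lam : Rt[i]) : 'M[Rt[i]]_p :=
  lam ^+ m *: 1%:M - \sum_(i < m) lam ^+ i *: C i
  + \sum_(j < n) \sum_(1 <= k < (mult j).+1) ((lam - a j) ^+ k)^-1 *: B j k.

Definition is_eigenvalue (Rt : realType) (p n : nat) (a : 'I_n -> Rt[i])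
  (Rf : Rt[i] -> 'M[Rt[i]]_p) (lam0 : Rt[i]) : Prop :=
  (forall j, lam0 <> a j) /\ exists v : 'cV[Rt[i]]_p, v <> 0 /\ Rf lam0 *m v = 0.

Definition qfun (Rt : realType) (p m n : nat) (N : 'M[Rt[i]]_p -> Rt)
  (C : 'I_m -> 'M[Rt[i]]_p) (a : 'I_n -> Rt[i]) (mult : 'I_n -> nat)
  (B : 'I_n -> nat -> 'M[Rt[i]]_p) (x : Rt) : Rt :=
  x ^+ m - \sum_(i < m) N (C i) * x ^+ i
  - \sum_(j < n) \sum_(1 <= k < (mult j).+1) N (B j k) / (x - cmod (a j)) ^+ k.

(* Apply R(lambda0) to an eigenvector v and take norms: with x = |lambda0| > max_j |a_j|,
   x^m <= Q(x) := sum_i ||C_i|| x^i + sum_{j,k} ||B_k^(j)|| / (x - |a_j|)^k, whereas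
   q(R) = 0 says R^m = Q(R).  Since Q(y) / y^(m-1) is nonincreasing for y > max_j |a_j|
   and y^m / y^(m-1) = y is increasing, |lambda0| <= R follows.  The induced norm is a
   supremum, so it bounds nu (A v) / nu v only once that set of ratios is known to be
   bounded; this is the equivalence of nu with the l1 norm, obtained by compactness of
   the unit sphere of R^(2p). *)
From HB Require Import structures.
From mathcomp Require Import all_boot all_order all_algebra.
From mathcomp Require Import complex.
From mathcomp Require Import boolp classical_sets reals.
From mathcomp Require Import topology normedtype derive.
From mathcomp Require Import lra ring.
Import Order.TTheory GRing.Theory Num.Theory.
Import numFieldNormedType.Exports.
Set Implicit Arguments. Unset Strict Implicit. Unset Printing Implicit Defensive.
Local Open Scope ring_scope.
Local Open Scope classical_set_scope.

Section ComplexModulus.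
Variable Rt : realType.
Implicit Types x y z : Rt[i].

Lemma cmod_ge0 z : 0 <= cmod z.
Proof. by case: z => a b; rewrite /cmod /= sqrtr_ge0. Qed.

Lemma cmod0 : cmod (0 : Rt[i]) = 0.
Proof. exact: ComplexField.Normc.normc0. Qed.

Lemma cmod1 : cmod (1 : Rt[i]) = 1.
Proof. exact: ComplexField.Normc.normc1. Qed.

Lemma cmodM x y : cmod (x * y) = cmod x * cmod y.
Proof. exact: ComplexField.Normc.normcM. Qed.

Lemma cmodV x : cmod x^-1 = (cmod x)^-1.
Proof. exact: ComplexField.Normc.normcV. Qed.

Lemma cmodN x : cmod (- x) = cmod x.
Proof. exact: normcN. Qed.

Lemma cmodX x k : cmod (x ^+ k) = cmod x ^+ k.
Proof. by elim: k => [|k IH]; rewrite ?expr0 ?cmod1 // !exprS cmodM IH. Qed.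

Lemma cmod_real (c : Rt) : cmod (c%:C)%C = `|c|.
Proof. by rewrite /cmod /= expr0n /= addr0 sqrtr_sqr. Qed.

Lemma ler_cmodD x y : cmod (x + y) <= cmod x + cmod y.
Proof. exact: le_normcD. Qed.

Lemma ler_cmodB x y : cmod x - cmod y <= cmod (x - y).
Proof. by rewrite lerBlDr; apply: le_trans (ler_cmodD _ _); rewrite subrK. Qed.

Lemma ler_cmod_sum I (r : seq I) (P : pred I) (F : I -> Rt[i]) :
  cmod (\sum_(i <- r | P i) F i) <= \sum_(i <- r | P i) cmod (F i).
Proof.
elim/big_rec2: _ => [|i y1 y2 _ IH]; first by rewrite cmod0.
by apply: le_trans (ler_cmodD _ _) _; rewrite lerD2l.
Qed.

Lemma ler_cmod_complex (a b : Rt) : cmod (Complex a b) <= `|a| + `|b|.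
Proof.
have -> : Complex a b = (a%:C)%C + Complex 0 b.
  by apply/eqP; rewrite eq_complex /= addr0 add0r !eqxx.
apply: le_trans (ler_cmodD _ _) _; rewrite cmod_real lerD2l.
by rewrite /cmod /= expr0n /= add0r sqrtr_sqr.
Qed.

End ComplexModulus.

Section VectorNorm.
Variables (Rt : realType) (p : nat) (nu : 'cV[Rt[i]]_p -> Rt).
Hypothesis hnu : is_vnorm nu.
Implicit Types v w : 'cV[Rt[i]]_p.

Lemma vnorm_ge0 v : 0 <= nu v. Proof. by case: hnu. Qed.

Lemma vnorm_eq0 v : nu v = 0 -> v = 0. Proof. by case: hnu => _ /(_ v). Qed.

Lemma vnormZ c v : nu (c *: v) = cmod c * nu v. Proof. by case: hnu. Qed.

Lemma ler_vnormD v w : nu (v + w) <= nu v + nu w. Proof. by case: hnu. Qed.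

Lemma vnorm_gt0 v : v != 0 -> 0 < nu v.
Proof. by move=> v0; rewrite lt_def vnorm_ge0 andbT; apply: contraNneq v0 => /vnorm_eq0->. Qed.

Lemma vnorm0 : nu 0 = 0.
Proof. by rewrite -(scale0r (0 : 'cV[Rt[i]]_p)) vnormZ cmod0 mul0r. Qed.

Lemma vnormN v : nu (- v) = nu v.
Proof. by rewrite -scaleN1r vnormZ cmodN cmod1 mul1r. Qed.

Lemma ler_vnorm_dist v w : `|nu v - nu w| <= nu (v - w).
Proof.
have h1 := ler_vnormD (v - w) w; rewrite subrK in h1.
have h2 := ler_vnormD (w - v) v; rewrite subrK -opprB vnormN in h2.
by rewrite ler_norml; apply/andP; split; lra.
Qed.

Lemma ler_vnorm_sum I (r : seq I) (P : pred I) (F : I -> 'cV[Rt[i]]_p) :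
  nu (\sum_(i <- r | P i) F i) <= \sum_(i <- r | P i) nu (F i).
Proof.
elim/big_rec2: _ => [|i y1 y2 _ IH]; first by rewrite vnorm0.
by apply: le_trans (ler_vnormD _ _) _; rewrite lerD2l.
Qed.

Definition l1norm w := \sum_i cmod (w i 0).

Definition mx_l1norm (A : 'M[Rt[i]]_p) := \sum_i \sum_j cmod (A i j).

Definition unit_vnorm_sum := \sum_(i < p) nu (delta_mx i 0).

Lemma l1norm_ge0 w : 0 <= l1norm w.
Proof. by apply: sumr_ge0 => i _; apply: cmod_ge0. Qed.

Lemma mx_l1norm_ge0 A : 0 <= mx_l1norm A.
Proof. by apply: sumr_ge0 => i _; apply: sumr_ge0 => j _; apply: cmod_ge0. Qed.

Lemma unit_vnorm_sum_ge0 : 0 <= unit_vnorm_sum.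
Proof. by apply: sumr_ge0 => i _; apply: vnorm_ge0. Qed.

Lemma ler_cmod_l1norm w i : cmod (w i 0) <= l1norm w.
Proof. by rewrite /l1norm (bigD1 i) //= lerDl sumr_ge0 // => j _; apply: cmod_ge0. Qed.

Lemma vnorm_le_l1norm w : nu w <= unit_vnorm_sum * l1norm w.
Proof.
have w_sum : w = \sum_(i < p) w i 0 *: delta_mx i 0.
  by rewrite {1}(matrix_sum_delta w); apply: eq_bigr => i _; rewrite big_ord1.
rewrite {1}w_sum; apply: le_trans (ler_vnorm_sum _ _ _) _.
rewrite /unit_vnorm_sum mulr_suml; apply: ler_sum => i _; rewrite vnormZ mulrC.
by apply: ler_wpM2l; [apply: vnorm_ge0 | apply: ler_cmod_l1norm].
Qed.

Lemma l1norm_mulmx A w : l1norm (A *m w) <= mx_l1norm A * l1norm w.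
Proof.
rewrite /l1norm /mx_l1norm mulr_suml; apply: ler_sum => i _; rewrite mxE.
apply: le_trans (ler_cmod_sum _ _ _) _.
rewrite mulr_suml; apply: ler_sum => j _.
by rewrite cmodM; apply: ler_wpM2l; [apply: cmod_ge0 | apply: ler_cmod_l1norm].
Qed.

End VectorNorm.

Lemma unit_sphere_compact (Rt : realType) (k : nat) :
  compact [set x : 'rV[Rt]_k | `|x| = 1].
Proof.
apply: bounded_closed_compact.
  by rewrite /bounded_set /= /bounded_near; near=> M => x /= ->; near: M; apply: nbhs_pinfty_ge.
exact: (continuous_closedP _).1 (@norm_continuous _ 'rV[Rt]_k) [set 1] (@closed_eq _ 1).
Unshelve. all: by end_near. Qed.

Section NormEquivalence.
Variables (Rt : realType) (p : nat) (nu : 'cV[Rt[i]]_p -> Rt).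
Hypothesis hnu : is_vnorm nu.
Hypothesis hp : (0 < p)%N.

Definition cV_of_realrow (x : 'rV[Rt]_(p + p)) : 'cV[Rt[i]]_p :=
  \col_i Complex (x 0 (lshift p i)) (x 0 (rshift p i)).

Definition realrow_of_cV (w : 'cV[Rt[i]]_p) : 'rV[Rt]_(p + p) :=
  \row_j match split j with
         | inl i => complex.Re (w i 0)
         | inr i => complex.Im (w i 0)
         end.

Lemma realrow_of_cVK w : cV_of_realrow (realrow_of_cV w) = w.
Proof.
apply/matrixP => i j; rewrite (ord1 j) !mxE.
by rewrite (unsplitK (inl i)) (unsplitK (inr i)); case: (w i 0).
Qed.

Lemma cV_of_realrowB x y : cV_of_realrow (x - y) = cV_of_realrow x - cV_of_realrow y.
Proof. by apply/matrixP => i j; rewrite !mxE. Qed.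

Lemma cV_of_realrowZ (c : Rt) x : cV_of_realrow (c *: x) = (c%:C)%C *: cV_of_realrow x.
Proof.
apply/matrixP => i j; rewrite !mxE /=.
by apply/eqP; rewrite eq_complex /= !mul0r subr0 addr0 !eqxx.
Qed.

Lemma cV_of_realrow_eq0 x : cV_of_realrow x = 0 -> x = 0.
Proof.
move=> /matrixP x0; apply/rowP => j; rewrite -(splitK j).
by case: (split j) => i /=; have := x0 i 0; rewrite !mxE => -[].
Qed.

Lemma ler_entry_norm (x : 'rV[Rt]_(p + p)) j : `|x 0 j| <= `|x|.
Proof.
have /mapP[k k_in ->] : `|x 0 j| \in [seq `|x ij.1 ij.2| | ij : 'I_1 * 'I_(p + p)].
  by apply/mapP; exists (0, j) => //=; rewrite mem_enum.
by rewrite [leRHS]/Num.norm /= mx_normrE; apply/bigmax_geP; right; exists k.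
Qed.

Lemma l1norm_cV_of_realrow x : l1norm (cV_of_realrow x) <= p%:R * 2 * `|x|.
Proof.
have entry_le i : cmod (cV_of_realrow x i 0) <= 2 * `|x|.
  rewrite mxE; apply: le_trans (ler_cmod_complex _ _) _.
  by have := ler_entry_norm x (lshift p i); have := ler_entry_norm x (rshift p i); lra.
apply: le_trans (ler_sum _ (fun i _ => entry_le i)) _.
by rewrite sumr_const card_ord -(mulr_natl (2 * `|x|)) mulrA.
Qed.

Let g x := nu (cV_of_realrow x).

Let lip := unit_vnorm_sum nu * (p%:R * 2) + 1.

Lemma lip_gt0 : 0 < lip.
Proof. by rewrite /lip ltr_wpDl ?ltr01 // !mulr_ge0 ?ler0n ?unit_vnorm_sum_ge0. Qed.

Lemma vnorm_realrow_lipschitz x y : `|g x - g y| <= lip * `|x - y|.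
Proof.
apply: le_trans (ler_vnorm_dist hnu _ _) _.
rewrite -cV_of_realrowB; apply: le_trans (vnorm_le_l1norm hnu _) _.
have h1 := l1norm_cV_of_realrow (x - y).
have h2 := unit_vnorm_sum_ge0 hnu.
have h3 : 0 <= `|x - y| by [].
have h4 := l1norm_ge0 (cV_of_realrow (x - y)).
have h5 := ler_wpM2l h2 h1.
rewrite /lip; nra.
Qed.

Lemma vnorm_realrow_continuous : continuous g.
Proof.
move=> x; apply/(@cvgrPdist_lt _ _ _ (nbhs x) (nbhs_filter x)) => e e0.
apply/nbhs_ballP; exists (e / lip); first by rewrite /= divr_gt0 ?lip_gt0.
move=> y; rewrite -ball_normE /ball_ /= => xy.
apply: le_lt_trans (vnorm_realrow_lipschitz _ _) _.
by rewrite mulrC -ltr_pdivlMr ?lip_gt0.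
Qed.

Lemma l1norm_le_vnorm : exists2 L, 0 < L & forall w, l1norm w <= L * nu w.
Proof.
set S := [set x : 'rV[Rt]_(p + p) | `|x| = 1].
have S0 : S !=set0.
  pose x0 : 'rV[Rt]_(p + p) := const_mx 1.
  have x0_neq0 : x0 != 0.
    by apply/eqP => /rowP /(_ (lshift p (Ordinal hp))); rewrite !mxE; apply/eqP/oner_neq0.
  exists (`|x0|^-1 *: x0); rewrite /S /= normrZ ger0_norm ?invr_ge0 //.
  by rewrite mulVf // normr_eq0.
have [c cS cmin] := compact_EVT_min S0 (@unit_sphere_compact Rt (p + p))
  (continuous_subspaceT vnorm_realrow_continuous).
rewrite inE /S /= in cS.
have gc_gt0 : 0 < g c.
  rewrite lt_def vnorm_ge0 // andbT; apply/eqP => /(vnorm_eq0 hnu) /cV_of_realrow_eq0 c0.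
  by move: cS; rewrite c0 normr0 => /eqP; rewrite eq_sym oner_eq0.
have g_ge x : g c * `|x| <= g x.
  have [->|x0] := eqVneq x 0; first by rewrite normr0 mulr0 vnorm_ge0.
  have nx : 0 < `|x| by rewrite normr_gt0.
  have := cmin (`|x|^-1 *: x).
  rewrite inE /S /= normrZ ger0_norm ?invr_ge0 // mulVf ?normr_eq0 // => /(_ erefl).
  rewrite /g cV_of_realrowZ (vnormZ hnu) cmod_real ger0_norm ?invr_ge0 ?normr_ge0 //.
  by rewrite -/(g x) ler_pdivlMl // mulrC.
exists (p%:R * 2 / g c); first by rewrite divr_gt0 // mulr_gt0 // ltr0n.
move=> w; rewrite -{1}(realrow_of_cVK w).
apply: le_trans (l1norm_cV_of_realrow _) _.
have := g_ge (realrow_of_cV w); rewrite /g realrow_of_cVK => gw.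
rewrite -[leRHS]mulrA; apply: ler_wpM2l; first by rewrite mulr_ge0 // ler0n.
by rewrite ler_pdivlMl.
Qed.

End NormEquivalence.

Section InducedNorm.
Variables (Rt : realType) (p : nat) (nu : 'cV[Rt[i]]_p -> Rt).
Hypothesis hnu : is_vnorm nu.
Hypothesis hp : (0 < p)%N.

Lemma vnorm_mulmx_le (A : 'M[Rt[i]]_p) w :
  nu (A *m w) <= induced_norm nu A * nu w.
Proof.
have [L L0 HL] := l1norm_le_vnorm hnu hp.
have ub : ubound [set nu (A *m v) | v in [set v | nu v = 1]] (induced_norm nu A).
  apply: ub_le_sup; exists (unit_vnorm_sum nu * (mx_l1norm A * L)) => y [v /= v1 <-].
  apply: le_trans (vnorm_le_l1norm hnu _) _.
  apply: ler_wpM2l; first exact: unit_vnorm_sum_ge0.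
  apply: le_trans (l1norm_mulmx _ _) _.
  by apply: ler_wpM2l; [apply: mx_l1norm_ge0 | have := HL v; rewrite v1 mulr1].
have [w0|w_neq0] := eqVneq w 0; first by rewrite w0 mulmx0 vnorm0 // mulr0.
have w_gt0 := vnorm_gt0 hnu w_neq0.
set c := ((nu w)^-1)%:C%C.
have cmod_c : cmod c = (nu w)^-1 by rewrite cmod_real ger0_norm // invr_ge0 ltW.
rewrite -ler_pdivrMr // mulrC -cmod_c -(vnormZ hnu) scalemxAr; apply: ub.
by exists (c *: w); rewrite //= (vnormZ hnu) cmod_c mulVf ?gt_eqF.
Qed.

Lemma induced_norm_ge0 (A : 'M[Rt[i]]_p) : 0 <= induced_norm nu A.
Proof.
pose e : 'cV[Rt[i]]_p := delta_mx (Ordinal hp) 0.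
have e_gt0 : 0 < nu e.
  apply: (vnorm_gt0 hnu); apply/eqP => /matrixP /(_ (Ordinal hp) 0).
  by rewrite !mxE !eqxx; apply/eqP/oner_neq0.
by rewrite -(pmulr_lge0 _ e_gt0); apply: le_trans (vnorm_mulmx_le A e); apply: vnorm_ge0.
Qed.

End InducedNorm.

Lemma expr_cross_le (R : numDomainType) (r x : R) i k :
  0 <= r <= x -> (i <= k)%N -> r ^+ k * x ^+ i <= x ^+ k * r ^+ i.
Proof.
move=> /andP[r0 rx] ik; rewrite -(subnKC ik) !exprD.
rewrite [leLHS](_ : _ = r ^+ i * x ^+ i * r ^+ (k - i)); last by ring.
rewrite [leRHS](_ : _ = r ^+ i * x ^+ i * x ^+ (k - i)); last by ring.
apply: ler_wpM2l; first by rewrite mulr_ge0 ?exprn_ge0 ?(le_trans r0 rx).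
by rewrite lerXn2r ?nnegrE ?(le_trans r0 rx).
Qed.

Lemma ler_invX (R : numFieldType) (y x : R) k :
  0 < y -> y <= x -> (x ^+ k)^-1 <= (y ^+ k)^-1.
Proof.
move=> y0 yx; have x0 := lt_le_trans y0 yx.
by rewrite lef_pV2 ?posrE ?exprn_gt0 // lerXn2r ?nnegrE ?(ltW y0) ?(ltW x0).
Qed.

Lemma ler_expr_cross (R : numDomainType) (r x : R) k : (0 < k)%N -> 0 < r -> 0 < x ->
  r ^+ k.-1 * x ^+ k <= x ^+ k.-1 * r ^+ k -> x <= r.
Proof.
case: k => // k _ r0 x0; rewrite !exprS mulrCA [leRHS]mulrCA [x ^+ k * _]mulrC.
by rewrite ler_pM2r ?mulr_gt0 ?exprn_gt0.
Qed.

Section Majorant.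
Variables (Rt : realType) (p m n : nat).
Variables (C : 'I_m -> 'M[Rt[i]]_p) (a : 'I_n -> Rt[i]).
Variables (mult : 'I_n -> nat) (B : 'I_n -> nat -> 'M[Rt[i]]_p).

Definition qmajorant (N : 'M[Rt[i]]_p -> Rt) (y : Rt) : Rt :=
  \sum_(i < m) N (C i) * y ^+ i
  + \sum_(j < n) \sum_(1 <= k < (mult j).+1) N (B j k) / (y - cmod (a j)) ^+ k.

Lemma qfunE N y : qfun N C a mult B y = y ^+ m - qmajorant N y.
Proof. by rewrite /qfun /qmajorant opprD addrA. Qed.

(* [q(y) / y^(m-1) = y - qmajorant N y / y^(m-1)] and the subtracted term is nonincreasing. *)
Lemma qmajorant_homog_le N (r x : Rt) :
  (forall A, 0 <= N A) -> (forall j, cmod (a j) < r) -> 0 < r -> r <= x ->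
  r ^+ m.-1 * qmajorant N x <= x ^+ m.-1 * qmajorant N r.
Proof.
move=> N0 ar r0 rx; have x0 := lt_le_trans r0 rx.
rewrite !mulrDr; apply: lerD; rewrite !mulr_sumr; apply: ler_sum => i _.
  rewrite mulrCA [leRHS]mulrCA; apply: ler_wpM2l => //.
  by apply: expr_cross_le; rewrite ?(ltW r0) ?rx // -ltnS (ltn_predK (ltn_ord i)).
rewrite !mulr_sumr; apply: ler_sum => k _.
have xa : 0 <= x - cmod (a i) by rewrite subr_ge0 ltW // (lt_le_trans (ar i)).
apply: ler_pM.
- by rewrite exprn_ge0 ?(ltW r0).
- by rewrite divr_ge0 ?exprn_ge0.
- by rewrite lerXn2r ?nnegrE ?(ltW r0) ?(ltW x0).
- by rewrite ler_wpM2l ?ler_invX ?subr_gt0 ?lerD2r.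
Qed.

Lemma eigen_equation lam (v : 'cV[Rt[i]]_p) : Rmat C a mult B lam *m v = 0 ->
  lam ^+ m *: v = \sum_(i < m) lam ^+ i *: (C i *m v)
    - \sum_(j < n) \sum_(1 <= k < (mult j).+1) ((lam - a j) ^+ k)^-1 *: (B j k *m v).
Proof.
rewrite /Rmat !mulmxDl mulNmx -scalemxAl mul1mx !mulmx_suml.
under eq_bigr do rewrite -scalemxAl.
under [X in _ + X]eq_bigr do rewrite mulmx_suml.
under [X in _ + X]eq_bigr do under eq_bigr do rewrite -scalemxAl.
by move=> Rv; apply/eqP; rewrite -subr_eq0 opprB addrA addrAC Rv.
Qed.

Lemma qmajorant_eigen (nu : 'cV[Rt[i]]_p -> Rt) lam0 :
  is_vnorm nu -> (0 < p)%N -> is_eigenvalue a (Rmat C a mult B) lam0 ->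
  (forall j, cmod (a j) < cmod lam0) ->
  cmod lam0 ^+ m <= qmajorant (induced_norm nu) (cmod lam0).
Proof.
move=> hnu hp [_ [v [v0 /eigen_equation Rv]]] alam.
have v_gt0 : 0 < nu v by apply/(vnorm_gt0 hnu)/eqP.
have N0 := induced_norm_ge0 hnu hp.
have term_le c A : nu (c *: (A *m v)) <= cmod c * (induced_norm nu A * nu v).
  by rewrite (vnormZ hnu) ler_wpM2l ?cmod_ge0 ?vnorm_mulmx_le.
rewrite -(ler_pM2r v_gt0) -cmodX -(vnormZ hnu) Rv mulrDl.
apply: (le_trans (ler_vnormD hnu _ _)); rewrite (vnormN hnu).
apply: lerD.
  apply: le_trans; first exact: (ler_vnorm_sum hnu).
  rewrite mulr_suml; apply: ler_sum => i _; apply: le_trans (term_le _ _) _.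
  by rewrite cmodX mulrA [cmod lam0 ^+ i * _]mulrC.
apply: le_trans; first exact: (ler_vnorm_sum hnu).
rewrite mulr_suml; apply: ler_sum => j _.
apply: le_trans; first exact: (ler_vnorm_sum hnu).
rewrite mulr_suml; apply: ler_sum => k _; apply: le_trans (term_le _ _) _.
rewrite mulrA; apply: ler_wpM2r; first exact: vnorm_ge0.
rewrite mulrC ler_wpM2l // cmodV cmodX ler_invX ?subr_gt0 ?ler_cmodB //.
Qed.

End Majorant.

Theorem theorem3p8 (Rt : realType) (p m n : nat)
  (hp : (1 <= p)%N) (hm : (1 <= m)%N) (hn : (1 <= n)%N)
  (a : 'I_n -> Rt[i]) (ha : injective a)
  (mult : 'I_n -> nat) (hmult : forall j, (1 <= mult j)%N)
  (C : 'I_m -> 'M[Rt[i]]_p) (B : 'I_n -> nat -> 'M[Rt[i]]_p)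
  (nu : 'cV[Rt[i]]_p -> Rt) (hnu : is_vnorm nu)
  (lam0 : Rt[i])
  (heig : is_eigenvalue a (Rmat C a mult B) lam0)
  (r : Rt)
  (hr : qfun (induced_norm nu) C a mult B r = 0)
  (har : forall j, cmod (a j) < r) :
  cmod lam0 <= r.
Proof.
have r0 : 0 < r := le_lt_trans (cmod_ge0 _) (har (Ordinal hn)).
rewrite leNgt; apply/negP => r_lt.
have lam_gt : forall j, cmod (a j) < cmod lam0 := fun j => lt_trans (har j) r_lt.
have Qlam := qmajorant_eigen hnu hp heig lam_gt.
have Qr : qmajorant C a mult B (induced_norm nu) r = r ^+ m.
  by move/eqP: hr; rewrite qfunE subr_eq0 => /eqP.
have Qhomog := qmajorant_homog_le C mult B (induced_norm_ge0 hnu hp) har r0 (ltW r_lt).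
have := le_trans (ler_wpM2l (exprn_ge0 _ (ltW r0)) Qlam) Qhomog.
rewrite Qr => /(ler_expr_cross hm r0 (lt_trans r0 r_lt)) /(lt_le_trans r_lt).
by rewrite ltxx.
Qed.
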